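(* Let $q=p^m$ with $p$ prime, $3\le k\le n\le q$, $\alpha=(\alpha_1,\dots,\alpha_n)\in\mathbb{F}_q^n$ with pairwise distinct entries, $v\in(\mathbb{F}_q^* )^n$, $\eta\in\mathbb{F}_q^*$, $\delta\in\mathbb{F}_q$, and let $\mathcal{C}$ be the code of length $n+3$ defined in the context. If $3\le k\le n-4$, then $\mathcal{C}$ is of non-GRS type, i.e. it is not monomially equivalent to any generalized Reed–Solomon code.
   Context: Let $\mathcal{S}=\{f(x)=\sum_{i=0}^{k-1}f_ix^i+\eta f_{k-1}x^{k+2}:f_i\in\mathbb{F}_q\}$ and $\mathcal{C}=\{(v_1f(\alpha_1),\dots,v_nf(\alpha_n),f_{k-1},f_{k-2},f_{k-3}+\delta f_{k-1}):f\in\mathcal{S}\}\subseteq\mathbb{F}_q^{n+3}$, where $f_j$ is the coefficient of $x^j$ ($j\le k-1$). A generalized Reed–Solomon (GRS) code of length $N$ and dimension $k$ is $\{(w_1g(\beta_1),\dots,w_Ng(\beta_N)):g\in\mathbb{F}_q[x],\deg g<k\}$ for pairwise distinct $\beta_i\in\mathbb{F}_q$ and $w_i\in\mathbb{F}_q^*$. Two codes of the same length are monomially equivalent if $GM$ generates the second code for some generator matrix $G$ of the first and some monomial matrix $M$. *)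

From HB Require Import structures.
From mathcomp Require Import all_boot all_order all_algebra.
Set Implicit Arguments. Unset Strict Implicit. Unset Printing Implicit Defensive.
Import GRing.Theory.
Local Open Scope ring_scope.

Definition code (F : fieldType) (N : nat) := 'rV[F]_N -> Prop.

Definition generates (F : fieldType) (r N : nat) (G : 'M[F]_(r, N)) (C : code F N) :=
  row_free G /\ forall x : 'rV[F]_N, C x <-> exists u : 'rV[F]_r, x = u *m G.

Definition monomial_mx (F : fieldType) (N : nat) (M : 'M[F]_N) :=
  (forall i : 'I_N, #|[set j : 'I_N | M i j != 0]| = 1%N) /\
  (forall j : 'I_N, #|[set i : 'I_N | M i j != 0]| = 1%N).

Definition monomially_equivalent (F : fieldType) (N : nat) (C1 C2 : code F N) :=
  exists (r : nat) (G : 'M[F]_(r, N)) (M : 'M[F]_N),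
    generates G C1 /\ monomial_mx M /\ generates (G *m M) C2.

Definition GRS_code (F : fieldType) (N k : nat) (beta w : 'I_N -> F) : code F N :=
  fun x => exists g : {poly F}, (size g <= k)%N /\
    x = \row_(i < N) (w i * g.[beta i]).

Definition is_GRS (F : fieldType) (N : nat) (C : code F N) :=
  exists (k : nat) (beta w : 'I_N -> F),
    injective beta /\ (forall i, w i != 0) /\
    (forall x, C x <-> GRS_code k beta w x).

Definition twisted_code (F : fieldType) (n k : nat) (alpha v : 'I_n -> F)
    (eta delta : F) : code F (n + 3) :=
  fun x => exists g : {poly F}, (size g <= k)%N /\
    let f := g + (eta * g`_(k.-1)) *: 'X^(k + 2) in
    x = \row_(j < n + 3)
          match split j with
          | inl i => v i * f.[alpha i]
          | inr t => if val t == 0%N then g`_(k.-1)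
                     else if val t == 1%N then g`_(k - 2)
                     else g`_(k - 3) + delta * g`_(k.-1)
          end.

(* If C were monomially equivalent to a GRS code, counting codewords shows that the GRS code
   has dimension at most k, so the monomial map M sends every codeword of C to a word
   (w_i h(beta_i))_i with deg h < k.  Three codewords vanishing on k - 3 common coordinates
   are then sent to words of polynomials q_0 P, q_1 P, q_2 P with P fixed and deg q_a <= 2;
   the six products q_a q_b lie in a space of dimension 5, so the three words satisfy a
   nontrivial coordinatewise quadratic relation, and so do the codewords themselves because M
   only rescales coordinates.  For k = 3 we take the codewords of 1, x, x^2; for k >= 4 those
   of P, xP, x^2 P, where P vanishes at k - 4 evaluation points.  On the evaluation coordinates
   the relation becomes a polynomial identity with more roots than its degree; the twist
   eta x^5 (for k = 3), resp. the redundancy coordinate f_{k-3} (for k >= 4), then forces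
   every coefficient of the relation to vanish. *)

From HB Require Import structures.
From mathcomp Require Import all_boot all_order all_algebra.
From mathcomp Require Import ring zify.
Set Implicit Arguments. Unset Strict Implicit. Unset Printing Implicit Defensive.
Import GRing.Theory.
Local Open Scope ring_scope.

Record tquad (R : Type) := TQuad { tq00 : R; tq01 : R; tq02 : R; tq11 : R; tq12 : R; tq22 : R }.

Definition tquad_map (R S : Type) (f : R -> S) (Q : tquad R) : tquad S :=
  TQuad (f (tq00 Q)) (f (tq01 Q)) (f (tq02 Q)) (f (tq11 Q)) (f (tq12 Q)) (f (tq22 Q)).

Definition tquad_eval (R : comPzRingType) (Q : tquad R) (a b c : R) : R :=
  tq00 Q * (a * a) + tq01 Q * (a * b) + tq02 Q * (a * c)
  + tq11 Q * (b * b) + tq12 Q * (b * c) + tq22 Q * (c * c).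

Definition quad_relation (R : comPzRingType) (N : nat) (Q : tquad R) (x0 x1 x2 : 'rV[R]_N) :=
  forall i, tquad_eval Q (x0 0 i) (x1 0 i) (x2 0 i) = 0.

Lemma tquad_evalE (R : comPzRingType) (l00 l01 l02 l11 l12 l22 a b c : R) :
  tquad_eval (TQuad l00 l01 l02 l11 l12 l22) a b c =
  l00 * (a * a) + l01 * (a * b) + l02 * (a * c) + l11 * (b * b) + l12 * (b * c) + l22 * (c * c).
Proof. by []. Qed.

Lemma tquad_evalZ (R : comPzRingType) (Q : tquad R) (s a b c : R) :
  tquad_eval Q (s * a) (s * b) (s * c) = s ^+ 2 * tquad_eval Q a b c.
Proof. by rewrite /tquad_eval; ring. Qed.

Lemma horner_tquad (R : comNzRingType) (Q : tquad R) (p0 p1 p2 : {poly R}) (x : R) :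
  (tquad_eval (tquad_map polyC Q) p0 p1 p2).[x] = tquad_eval Q p0.[x] p1.[x] p2.[x].
Proof. by rewrite /tquad_eval !hornerE. Qed.

Section PolyLinearAlgebra.
Variable F : fieldType.

Lemma poly_lin_dep d (ps : seq {poly F}) :
  all (fun p : {poly F} => size p <= d)%N ps -> (d < size ps)%N ->
  exists cs : seq F, [/\ size cs = size ps, cs != nseq (size ps) 0
                       & \sum_(i < size ps) cs`_i *: ps`_i = 0].
Proof.
move=> /allP ps_small d_lt; set m := size ps in d_lt *.
pose A : 'M[F]_(m, d) := \matrix_(i < m) poly_rV ps`_i.
have : kermx A != 0.
  by rewrite kermx_eq0 /row_free (ltn_eqF (leq_ltn_trans (rank_leq_col A) d_lt)).
case/rowV0Pn => u /sub_kermxP uA0 u_nz.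
have cs_nth (i : 'I_m) : [seq u 0 j | j <- enum 'I_m]`_i = u 0 i.
  by rewrite (nth_map i) ?size_enum_ord // nth_ord_enum.
exists [seq u 0 j | j <- enum 'I_m]; split.
- by rewrite size_map size_enum_ord.
- apply: contra_neq u_nz => cs0; apply/rowP => i.
  by rewrite -cs_nth cs0 nth_nseq ltn_ord mxE.
- rewrite -[RHS](linear0 (@rVpoly F d)) -uA0 mulmx_sum_row linear_sum.
  apply: eq_bigr => i _; rewrite cs_nth linearZ /= /A rowK poly_rV_K //.
  exact/ps_small/mem_nth.
Qed.

Lemma tquad_poly_relation (q0 q1 q2 : {poly F}) :
  (size q0 <= 3)%N -> (size q1 <= 3)%N -> (size q2 <= 3)%N ->
  exists2 Q : tquad F, Q <> TQuad 0 0 0 0 0 0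
    & tquad_eval (tquad_map polyC Q) q0 q1 q2 = 0.
Proof.
move=> s0 s1 s2.
have small (p q : {poly F}) :
    (size p <= 3)%N -> (size q <= 3)%N -> (size (p * q)%R <= 5)%N.
  by move=> sp sq; apply: leq_trans (size_polyMleq _ _) _; lia.
have all_small : all (fun p : {poly F} => size p <= 5)%N
    [:: q0 * q0; q0 * q1; q0 * q2; q1 * q1; q1 * q2; q2 * q2] by rewrite /= !small.
have [cs []] := poly_lin_dep all_small isT.
case: cs => [|l00 [|l01 [|l02 [|l11 [|l12 [|l22 [|]]]]]]] //= _ cs_nz.
rewrite !big_ord_recl big_ord0 /= addr0 => rel.
exists (TQuad l00 l01 l02 l11 l12 l22).
  by move: cs_nz => /[swap] -[-> -> -> -> -> ->]; rewrite eqxx.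
by rewrite /tquad_eval /= !mul_polyC -rel !addrA.
Qed.

Lemma roots_geq_coefs_eq0 (cs rs : seq F) :
  uniq rs -> (size cs <= size rs)%N -> {in rs, forall r, (Poly cs).[r] = 0} ->
  forall i, cs`_i = 0.
Proof.
move=> rs_uniq size_cs roots i.
rewrite -coef_Poly (@roots_geq_poly_eq0 _ (Poly cs) rs) ?coef0 //.
  by apply/allP => r /roots /eqP.
exact: leq_trans (size_Poly cs) _.
Qed.

Lemma prod_XsubC_factor (h : {poly F}) (rs : seq F) d :
  uniq rs -> all (root h) rs -> (size h <= size rs + d)%N ->
  exists2 q : {poly F}, (size q <= d)%N & h = q * \prod_(z <- rs) ('X - z%:P).
Proof.
move=> rs_uniq roots.
have [q ->] := uniq_roots_prod_XsubC roots (etrans (uniq_rootsE rs) rs_uniq).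
have [->|q_nz] := eqVneq q 0; first by exists 0; rewrite ?size_poly0.
rewrite size_mul // ?monic_neq0 ?monic_prod_XsubC // size_prod_XsubC.
by rewrite addnS /= addnC leq_add2l => size_q; exists q.
Qed.

End PolyLinearAlgebra.

Section MonomialMatrix.
Variables (F : fieldType) (N : nat) (M : 'M[F]_N).
Hypothesis monoM : monomial_mx M.

Definition monomial_col (i : 'I_N) : 'I_N := odflt i [pick j | M i j != 0].

Lemma monomial_colP i : M i (monomial_col i) != 0.
Proof.
rewrite /monomial_col; case: pickP => //= no_j.
have /card_gt0P[j] : (0 < #|[set j | M i j != 0%R]|)%N by rewrite monoM.1.
by rewrite inE no_j.
Qed.

Lemma monomial_row_uniq i i' j : M i j != 0 -> M i' j != 0 -> i = i'.
Proof.
have /cards1P[i0 col_j] : #|[set i | M i j != 0%R]| == 1%N by rewrite monoM.2.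
have in_col i1 : M i1 j != 0 -> i1 = i0 by move=> Mi1j; apply/set1P; rewrite -col_j inE.
by move=> /in_col-> /in_col->.
Qed.

Lemma monomial_col_inj : injective monomial_col.
Proof.
move=> i i' eq_col; apply: (monomial_row_uniq (monomial_colP i)).
by rewrite eq_col monomial_colP.
Qed.

Lemma mulmx_monomial_col (x : 'rV[F]_N) i :
  (x *m M) 0 (monomial_col i) = x 0 i * M i (monomial_col i).
Proof.
rewrite !mxE (bigD1 i) //= big1 ?addr0 // => i' i'_neq.
have [->|Mi'] := eqVneq (M i' (monomial_col i)) 0; first by rewrite mulr0.
by rewrite (monomial_row_uniq Mi' (monomial_colP i)) eqxx in i'_neq.
Qed.

(* Coordinate [monomial_col i] of [x *m M] is [x 0 i] times a nonzero scalar that does not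
   depend on [x], and [tquad_eval] is homogeneous. *)
Lemma quad_relation_monomial (Q : tquad F) (x0 x1 x2 : 'rV[F]_N) :
  quad_relation Q (x0 *m M) (x1 *m M) (x2 *m M) -> quad_relation Q x0 x1 x2.
Proof.
move=> rel i; have := rel (monomial_col i).
rewrite !mulmx_monomial_col ![_ * M i _]mulrC tquad_evalZ => /eqP.
by rewrite mulf_eq0 expf_eq0 (negbTE (monomial_colP i)) andbF => /eqP.
Qed.

End MonomialMatrix.

Section GRSWords.
Variables (F : fieldType) (N : nat) (beta w : 'I_N -> F).

Definition grs_word (h : {poly F}) : 'rV[F]_N := \row_i (w i * h.[beta i]).

Lemma grs_quad_relation (P q0 q1 q2 : {poly F}) :
  (size q0 <= 3)%N -> (size q1 <= 3)%N -> (size q2 <= 3)%N ->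
  exists2 Q : tquad F, Q <> TQuad 0 0 0 0 0 0
    & quad_relation Q (grs_word (q0 * P)) (grs_word (q1 * P)) (grs_word (q2 * P)).
Proof.
move=> s0 s1 s2; have [Q Q_nz rel] := tquad_poly_relation s0 s1 s2.
exists Q => // i; rewrite !mxE !hornerM.
by rewrite !mulrA !(mulrAC _ _ P.[beta i]) tquad_evalZ -horner_tquad rel horner0 mulr0.
Qed.

Hypotheses (beta_inj : injective beta) (w_nz : forall i, w i != 0).

Lemma grs_word_eq0 h i : (grs_word h 0 i == 0) = root h (beta i).
Proof. by rewrite mxE mulf_eq0 (negbTE (w_nz i)). Qed.

Lemma grs_word_inj : {in [pred h : {poly F} | size h <= N]%N &, injective grs_word}.
Proof.
move=> h1 h2; rewrite !inE => s1 s2 eq12; apply/eqP; rewrite -subr_eq0; apply/eqP.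
apply: (@roots_geq_poly_eq0 _ _ (map beta (enum 'I_N))).
- apply/allP => _ /mapP[i _ ->]; rewrite -grs_word_eq0 mxE hornerD hornerN mulrBr.
  by have := congr1 (fun x : 'rV_N => x 0 i) eq12; rewrite /= !mxE => ->; rewrite subrr.
- by rewrite map_inj_uniq ?enum_uniq.
- by rewrite size_map size_enum_ord (leq_trans (size_polyD _ _)) // size_polyN geq_max s1.
Qed.

End GRSWords.

Lemma monomial_grs_quad_relation (F : fieldType) N (M : 'M[F]_N) (beta w : 'I_N -> F)
    k (Z : seq 'I_N) (x0 x1 x2 : 'rV[F]_N) :
  monomial_mx M -> injective beta -> (forall j, w j != 0) ->
  uniq Z -> (k <= size Z + 3)%N ->
  {in Z, forall z, x0 0 z = 0} -> {in Z, forall z, x1 0 z = 0} -> {in Z, forall z, x2 0 z = 0} ->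
  (exists2 h : {poly F}, (size h <= k)%N & x0 *m M = grs_word beta w h) ->
  (exists2 h : {poly F}, (size h <= k)%N & x1 *m M = grs_word beta w h) ->
  (exists2 h : {poly F}, (size h <= k)%N & x2 *m M = grs_word beta w h) ->
  exists2 Q : tquad F, Q <> TQuad 0 0 0 0 0 0 & quad_relation Q x0 x1 x2.
Proof.
move=> monoM beta_inj w_nz Z_uniq k_le zero0 zero1 zero2 img0 img1 img2.
set rs := [seq beta (monomial_col M z) | z <- Z].
have factor (x : 'rV[F]_N) : {in Z, forall z, x 0 z = 0} ->
    (exists2 h : {poly F}, (size h <= k)%N & x *m M = grs_word beta w h) ->
    exists2 q : {poly F}, (size q <= 3)%N
      & x *m M = grs_word beta w (q * \prod_(r <- rs) ('X - r%:P)).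
  move=> zero [h size_h xM]; rewrite xM.
  have [|||q size_q ->] := @prod_XsubC_factor _ h rs 3; last by exists q.
  - by rewrite map_inj_uniq // => z z' /beta_inj /(monomial_col_inj monoM).
  - apply/allP => _ /mapP[z zZ ->]; rewrite -(grs_word_eq0 _ w_nz) -xM.
    by rewrite mulmx_monomial_col // zero // mul0r.
  - by rewrite size_map (leq_trans size_h).
have [q0 s0 E0] := factor x0 zero0 img0.
have [q1 s1 E1] := factor x1 zero1 img1.
have [q2 s2 E2] := factor x2 zero2 img2.
have [Q Q_nz rel] := grs_quad_relation beta w (\prod_(r <- rs) ('X - r%:P)) s0 s1 s2.
by exists Q => //; apply: (quad_relation_monomial monoM); rewrite E0 E1 E2.
Qed.

Lemma monomially_equivalent_image (F : fieldType) N (C1 C2 : code F N) :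
  monomially_equivalent C1 C2 ->
  exists2 M : 'M[F]_N, monomial_mx M &
    (forall x, C1 x -> C2 (x *m M)) /\ (forall y, C2 y -> exists2 x, C1 x & y = x *m M).
Proof.
case=> r [G [M [[_ C1_G] [monoM [_ C2_GM]]]]]; exists M => //; split.
  by move=> x /C1_G[u ->]; apply/C2_GM; exists u; rewrite mulmxA.
by move=> y /C2_GM[u ->]; exists (u *m G); [apply/C1_G; exists u | rewrite mulmxA].
Qed.

(* A choice of T-preimages of S gives an injection 'rV[F]_m -> 'rV[F]_k, and #|F| > 1. *)
Lemma leq_size_poly_inj (F : finFieldType) N m k (S T : {poly F} -> 'rV[F]_N) :
  {in [pred h : {poly F} | size h <= m]%N &, injective S} ->
  (forall h : {poly F}, (size h <= m)%N -> exists2 g : {poly F}, (size g <= k)%N & S h = T g) ->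
  (m <= k)%N.
Proof.
move=> S_inj S_sub.
pose phi (u : 'rV[F]_m) : 'rV[F]_k :=
  odflt 0 [pick u' : 'rV[F]_k | T (rVpoly u') == S (rVpoly u)].
have size_rVpoly d (u : 'rV[F]_d) : (size (rVpoly u) <= d)%N by apply: size_poly.
have phiP u : T (rVpoly (phi u)) = S (rVpoly u).
  rewrite /phi; case: pickP => [u' /eqP //|no_u'] /=.
  have [g size_g Eg] := S_sub _ (size_rVpoly _ u).
  by have := no_u' (poly_rV g); rewrite poly_rV_K // Eg eqxx.
have phi_inj : injective phi.
  move=> u1 u2 eq_phi; apply: (can_inj rVpolyK); apply: S_inj; rewrite ?inE ?size_rVpoly //.
  by rewrite -!phiP eq_phi.
have := leq_card phi phi_inj; rewrite !card_mx !mul1n leq_exp2l //.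
exact: card_finNzRing_gt1.
Qed.

Lemma monomial_GRS_image (F : finFieldType) N k (T : {poly F} -> 'rV[F]_N) (C C' : code F N) :
  (k < N)%N -> (forall x, C x <-> exists g : {poly F}, (size g <= k)%N /\ x = T g) ->
  is_GRS C' -> monomially_equivalent C C' ->
  exists (M : 'M[F]_N) (beta w : 'I_N -> F), [/\ monomial_mx M, injective beta, (forall j, w j != 0)
    & forall g : {poly F}, (size g <= k)%N ->
        exists2 h : {poly F}, (size h <= k)%N & T g *m M = grs_word beta w h].
Proof.
move=> k_lt C_T [k' [beta [w [beta_inj [w_nz C'_GRS]]]]].
case/monomially_equivalent_image => M monoM [C_C' C'_C].
have k'_le : (k' <= k)%N.
  rewrite leqNgt; apply/negP => k_lt'.
  suff: (k.+1 <= k)%N by rewrite ltnn.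
  apply: (@leq_size_poly_inj F N k.+1 k (grs_word beta w) (fun g => T g *m M)).
    apply: sub_in2 (grs_word_inj beta_inj w_nz) => h; rewrite !inE => size_h.
    exact: leq_trans size_h k_lt.
  move=> h size_h; have /C'_C[x /C_T[g [size_g ->]] ->] : C' (grs_word beta w h).
    by apply/C'_GRS; exists h; split; [apply: leq_trans k_lt' | ].
  by exists g.
exists M, beta, w; split=> // g size_g.
have /C'_GRS[h [size_h E]] : C' (T g *m M) by apply/C_C'/C_T; exists g.
by exists h; [apply: leq_trans k'_le | ].
Qed.

Section TwistedCode.
Variables (F : fieldType) (n : nat) (alpha v : 'I_n -> F) (eta delta : F).

Definition twisted_word k (g : {poly F}) : 'rV[F]_(n + 3) :=
  let f := g + (eta * g`_(k.-1)) *: 'X^(k + 2) in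
  \row_(j < n + 3)
    match split j with
    | inl i => v i * f.[alpha i]
    | inr t => if val t == 0%N then g`_(k.-1)
               else if val t == 1%N then g`_(k - 2)
               else g`_(k - 3) + delta * g`_(k.-1)
    end.

Lemma twisted_codeE k x :
  twisted_code k alpha v eta delta x <-> exists g : {poly F}, (size g <= k)%N /\ x = twisted_word k g.
Proof. by []. Qed.

Local Notation tw := twisted_word.

Lemma twisted_word_lshift k (g : {poly F}) j :
  tw k g 0 (lshift 3 j) = v j * (g + (eta * g`_(k.-1)) *: 'X^(k + 2)).[alpha j].
Proof. by rewrite mxE (unsplitK (inl _ j)). Qed.

Lemma twisted_word_lshift_small k (g : {poly F}) j :
  (size g <= k.-1)%N -> tw k g 0 (lshift 3 j) = v j * g.[alpha j].
Proof. by move=> size_g; rewrite twisted_word_lshift nth_default // mulr0 scale0r addr0. Qed.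

Lemma twisted_word_rshift k (g : {poly F}) t :
  tw k g 0 (rshift n t) = if val t == 0%N then g`_(k.-1)
                          else if val t == 1%N then g`_(k - 2)
                          else g`_(k - 3) + delta * g`_(k.-1).
Proof. by rewrite mxE (unsplitK (inr _ t)). Qed.

Hypotheses (alpha_inj : injective alpha) (v_nz : forall i, v i != 0).

Lemma twisted3_quad_relation_trivial (Q : tquad F) :
  eta != 0 -> (7 <= n)%N -> quad_relation Q (tw 3 1) (tw 3 'X) (tw 3 'X^2) ->
  Q = TQuad 0 0 0 0 0 0.
Proof.
move=> eta_nz n_ge; case: Q => l00 l01 l02 l11 l12 l22 rel.
have l22_0 : l22 = 0.
  have := rel (rshift n ord0); rewrite tquad_evalE !twisted_word_rshift /= !coefE /=.
  by rewrite !(mul0r, mulr0, mul1r, mulr1, add0r, addr0).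
have l11_0 : l11 = 0.
  have := rel (rshift n (lift ord0 ord0)); rewrite tquad_evalE !twisted_word_rshift /= !coefE /=.
  by rewrite !(mul0r, mulr0, mul1r, mulr1, add0r, addr0).
pose cs := [:: l00; l01; l02; l12; 0; eta * l02; eta * l12].
have cs_roots : {in map alpha (enum 'I_n), forall r, (Poly cs).[r] = 0}.
  move=> _ /mapP[j _ ->]; apply/eqP.
  have tw1 : tw 3 1 0 (lshift 3 j) = v j.
    by rewrite twisted_word_lshift coef1 mulr0 scale0r addr0 hornerC mulr1.
  have twX : tw 3 'X 0 (lshift 3 j) = v j * alpha j.
    by rewrite twisted_word_lshift coefX mulr0 scale0r addr0 hornerX.
  have twX2 : tw 3 'X^2 0 (lshift 3 j) = v j * (alpha j ^+ 2 + eta * alpha j ^+ 5).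
    by rewrite twisted_word_lshift coefXn mulr1 hornerD hornerZ !hornerXn.
  have : v j ^+ 2 * (Poly cs).[alpha j] = 0.
    rewrite -(rel (lshift 3 j)) tquad_evalE tw1 twX twX2 l11_0 l22_0.
    by rewrite !horner_cons horner0; ring.
  by move/eqP; rewrite mulf_eq0 expf_eq0 (negbTE (v_nz j)) andbF.
have alpha_uniq : uniq (map alpha (enum 'I_n)) by rewrite map_inj_uniq ?enum_uniq.
have cs0 : forall i, cs`_i = 0.
  by apply: roots_geq_coefs_eq0 alpha_uniq _ cs_roots; rewrite size_map size_enum_ord.
move: (cs0 0%N) (cs0 1%N) (cs0 5%N) (cs0 6%N) => /= -> -> /eqP + /eqP.
rewrite !mulf_eq0 (negbTE eta_nz) /= => /eqP-> /eqP->.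
by rewrite l11_0 l22_0.
Qed.

Lemma twisted3_not_monomial_GRS (M : 'M[F]_(n + 3)) (beta w : 'I_(n + 3) -> F) :
  eta != 0 -> (7 <= n)%N -> monomial_mx M -> injective beta -> (forall j, w j != 0) ->
  (forall g : {poly F}, (size g <= 3)%N ->
     exists2 h : {poly F}, (size h <= 3)%N & tw 3 g *m M = grs_word beta w h) ->
  False.
Proof.
move=> eta_nz n_ge monoM beta_inj w_nz img.
have no_zero (x : 'rV[F]_(n + 3)) : {in [::], forall z, x 0 z = 0} by [].
have [|||Q Q_nz] := monomial_grs_quad_relation monoM beta_inj w_nz (isT : uniq [::]) (leqnn 3)
  (no_zero _) (no_zero _) (no_zero _) (img 1 _) (img 'X _) (img 'X^2 _).
- by rewrite size_poly1.
- by rewrite size_polyX.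
- by rewrite size_polyXn.
by move/twisted3_quad_relation_trivial => /(_ eta_nz n_ge).
Qed.

Section LargeDimension.
Variables (k : nat) (T : seq 'I_n).
Hypotheses (k_ge4 : (4 <= k)%N) (n_ge : (k + 4 <= n)%N).
Hypotheses (T_uniq : uniq T) (size_T : size T = (k - 4)%N).

Definition vanishing_poly : {poly F} := \prod_(z <- map alpha T) ('X - z%:P).

Local Notation P := vanishing_poly.
Local Notation Z := (rshift n ord0 :: map (lshift 3) T).

Lemma vanishing_poly_neq0 : P != 0.
Proof. exact/monic_neq0/monic_prod_XsubC. Qed.

Lemma size_vanishing_poly : size P = (k - 3)%N.
Proof. by rewrite size_prod_XsubC size_map size_T; lia. Qed.

Lemma size_vanishing_polyX : size (P * 'X) = (k - 2)%N.
Proof. by rewrite size_mulX ?vanishing_poly_neq0 // size_vanishing_poly; lia. Qed.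

Lemma size_vanishing_polyX2 : size (P * 'X^2) = (k - 1)%N.
Proof. by rewrite size_mulXn ?vanishing_poly_neq0 // size_vanishing_poly; lia. Qed.

Lemma root_vanishing_poly j : root P (alpha j) = (j \in T).
Proof. by rewrite root_prod_XsubC mem_map. Qed.

Lemma twisted_word_vanish (g : {poly F}) :
  P %| g -> (size g <= k.-1)%N -> {in Z, forall z, tw k g 0 z = 0}.
Proof.
move=> P_g size_g z; rewrite inE => /predU1P[->|/mapP[j jT ->]].
  by rewrite twisted_word_rshift nth_default.
have /eqP g_j : root g (alpha j) by apply: root_dvdp P_g _; rewrite root_vanishing_poly.
by rewrite twisted_word_lshift_small // g_j mulr0.
Qed.

Lemma uniq_twisted_zeros : uniq Z.
Proof.
rewrite /= map_inj_uniq ?T_uniq ?andbT; last exact: lshift_inj.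
by apply/mapP => -[j _ /eqP]; rewrite eq_rlshift.
Qed.

Lemma twisted_quad_relation_trivial (Q : tquad F) :
  quad_relation Q (tw k P) (tw k (P * 'X)) (tw k (P * 'X^2)) -> Q = TQuad 0 0 0 0 0 0.
Proof.
case: Q => l00 l01 l02 l11 l12 l22 rel.
set c := (P * 'X^2)`_(k - 3).
have top_coef (g : {poly F}) : (size g <= k.-1)%N -> g`_k.-1 = 0.
  by move=> size_g; rewrite nth_default.
have Pk3 : P`_(k - 3) = 0 by rewrite nth_default ?size_vanishing_poly.
have PXk3 : (P * 'X)`_(k - 3) = 1.
  have k3_neq0 : (k - 3 != 0)%N by lia.
  by rewrite coefMX (negbTE k3_neq0) -size_vanishing_poly -lead_coefE lead_coef_prod_XsubC.
have rel_last : l11 + l12 * c + l22 * (c * c) = 0.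
  have := rel (rshift n ord_max); rewrite tquad_evalE !twisted_word_rshift /=.
  rewrite !top_coef ?size_vanishing_poly ?size_vanishing_polyX ?size_vanishing_polyX2; try lia.
  by rewrite Pk3 PXk3 !(mul0r, mulr0, mul1r, mulr1, add0r, addr0).
pose cs := [:: l00; l01; l02 + l11; l12; l22].
pose rs := map alpha (enum [predC T]).
have cs_roots : {in rs, forall r, (Poly cs).[r] = 0}.
  move=> r /mapP[j]; rewrite mem_enum inE => jT ->; apply/eqP.
  have : (v j * P.[alpha j]) ^+ 2 * (Poly cs).[alpha j] = 0.
    rewrite -(rel (lshift 3 j)) tquad_evalE !twisted_word_lshift_small;
      rewrite ?size_vanishing_poly ?size_vanishing_polyX ?size_vanishing_polyX2; try lia.
    by rewrite !horner_cons horner0 !hornerM hornerX; ring.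
  move/eqP; rewrite mulf_eq0 expf_eq0 mulf_eq0 (negbTE (v_nz j)) /=.
  by rewrite -/(root P (alpha j)) root_vanishing_poly (negbTE jT).
have rs_uniq : uniq rs by rewrite map_inj_uniq ?enum_uniq.
have cs0 : forall i, cs`_i = 0.
  apply: roots_geq_coefs_eq0 rs_uniq _ cs_roots.
  have card_compl : (size T + #|[predC T]|)%N = n.
    by rewrite -(card_uniqP T_uniq) -[n in RHS]card_ord; apply: cardC.
  by rewrite size_map -cardE -(leq_add2l (size T)) card_compl size_T /=; lia.
move: (cs0 0%N) (cs0 1%N) (cs0 2%N) (cs0 3%N) (cs0 4%N) => /= -> -> l02_l11 l12_0 l22_0.
move: rel_last; rewrite l12_0 l22_0 !mul0r !addr0 => l11_0.
by move: l02_l11; rewrite l11_0 addr0 => ->.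
Qed.

Lemma twisted_not_monomial_GRS (M : 'M[F]_(n + 3)) (beta w : 'I_(n + 3) -> F) :
  monomial_mx M -> injective beta -> (forall j, w j != 0) ->
  (forall g : {poly F}, (size g <= k)%N ->
     exists2 h : {poly F}, (size h <= k)%N & tw k g *m M = grs_word beta w h) ->
  False.
Proof.
move=> monoM beta_inj w_nz img.
have P_XP : P %| P * 'X by rewrite dvdp_mulr.
have P_X2P : P %| P * 'X^2 by rewrite dvdp_mulr.
have [|||||||Q Q_nz] := monomial_grs_quad_relation monoM beta_inj w_nz uniq_twisted_zeros _
  (twisted_word_vanish (dvdpp P) _) (twisted_word_vanish P_XP _) (twisted_word_vanish P_X2P _)
  (img P _) (img (P * 'X) _) (img (P * 'X^2) _);
  rewrite ?size_vanishing_poly ?size_vanishing_polyX ?size_vanishing_polyX2 /= ?size_map ?size_T; try lia.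
by move/twisted_quad_relation_trivial.
Qed.

End LargeDimension.
End TwistedCode.

Theorem theorem7 (F : finFieldType) (n k : nat) (alpha v : 'I_n -> F) (eta delta : F) :
  (3 <= k)%N -> (k <= n)%N -> (n <= #|F|)%N ->
  injective alpha -> (forall i, v i != 0) -> eta != 0 ->
  (k + 4 <= n)%N ->
  ~ (exists C' : code F (n + 3), is_GRS C' /\
       monomially_equivalent (twisted_code k alpha v eta delta) C').
Proof.
move=> k_ge3 _ _ alpha_inj v_nz eta_nz n_ge [C' [C'_GRS equiv]].
have k_lt : (k < n + 3)%N by lia.
have [M [beta [w [monoM beta_inj w_nz img]]]] :=
  monomial_GRS_image k_lt (twisted_codeE alpha v eta delta k) C'_GRS equiv.
have [k3|k_neq3] := eqVneq k 3.
  by subst k; exact: (twisted3_not_monomial_GRS alpha_inj v_nz eta_nz n_ge monoM beta_inj w_nz img).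
have k_ge4 : (4 <= k)%N by lia.
pose T := take (k - 4) (enum 'I_n).
have T_uniq : uniq T by rewrite take_uniq ?enum_uniq.
have size_T : size T = (k - 4)%N by rewrite size_takel // size_enum_ord; lia.
exact: (twisted_not_monomial_GRS alpha_inj v_nz k_ge4 n_ge T_uniq size_T monoM beta_inj w_nz img).
Qed.
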